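(* Let $n,f$ be integers with $1\le f\le n-1$ and $n\le 2f$. Then $(f+1)\text{-TAg}(n,f)$ is not $C$-reducible to $f\text{-TAg}(n,f)$, and consequently $\mathrm{Cons}(n,f)$ is not $C$-reducible to $f\text{-TAg}(n,f)$.
   Context: Model: a finite set of processes runs an asynchronous algorithm communicating by reliable message passing with unbounded delays and speeds; processes fail only by crashing. Time is $\mathcal T=\mathbb N$; a failure pattern $F$ for $\Pi$ is a nondecreasing map $\mathcal T\to2^\Pi$, $Faulty(F)=\bigcup_tF(t)$. A binary agreement problem $P$ for $\Pi$ maps each $(F,\vec V)$, $\vec V\in\{0,1\}^\Pi$, to a nonempty $P(F,\vec V)\subseteq\{0,1\}$; a task is $T=(P,f)$. An algorithm solves $T$ if in every run with $|Faulty(F)|\le f$ and initial values $\vec V$: every correct process eventually decides, decisions are irrevocable, no two processes decide differently, and decisions lie in $P(F,\vec V)$. $k\text{-TAg}_\Pi(F,\vec V)=\{0\}$ if at least $k$ entries of $\vec V$ are $0$; $=\{1\}$ if $\vec V$ is all-ones and $|Faulty(F)|\le k-1$; $=\{0,1\}$ otherwise; $k\text{-TAg}(\Pi,f)=(k\text{-TAg}_\Pi,f)$; $k\text{-TAg}(n,f)$ and $\mathrm{Cons}(n,f)=n\text{-TAg}(n,f)$ are the versions for $\Pi=\{1,\dots,n\}$. Oracles: for $T=(P,f)$ on $\Pi$, $\mathcal O.T$ is a black box with consultants $\Pi$; its history is a sequence of successive consultations, in each of which every consultant may submit at most one query in $\{0,1\}$ and the oracle returns a common response $d$ with $d\in P(F,\vec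 V)$ for every $\vec V$ extending the partial query vector (the oracle may base its answers on the whole failure pattern $F$, including crashes that occur later), and every correct querier gets the response whenever at least $|\Pi|-f$ consultants query; $\mathcal O.T$ is the most general such oracle. $T_1\le_C T_2$ means there is an algorithm solving $T_1$ whose processes, besides message passing, may consult the oracle $\mathcal O.T_2$. *)

From mathcomp Require Import all_boot.
From mathcomp Require Import boolp.

Set Implicit Arguments.
Unset Strict Implicit.
Unset Printing Implicit Defensive.

(* Processes: Pi = 'I_n (the paper's {1,...,n}, shifted to {0,...,n-1}).
   Time: nat.  Binary values: bool (false = 0, true = 1). *)

Definition fpattern (n : nat) := nat -> {set 'I_n}.

Definition nondecreasing n (F : fpattern n) :=
  forall t t', t <= t' -> F t \subset F t'.

Definition Faulty n (F : fpattern n) : {set 'I_n} :=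
  [set p | `[< exists t, p \in F t >]].

Definition problem (n : nat) := fpattern n -> ('I_n -> bool) -> {set bool}.

Record task (n : nat) := Task { tprob : problem n; tres : nat }.

Definition kTAg_prob n (k : nat) : problem n := fun (F : fpattern n) (V : 'I_n -> bool) =>
  if k <= #|[set p | ~~ V p]| then [set false]
  else if [forall p, V p] && (#|Faulty F| < k)%N
       then [set true]
       else [set: bool].

Definition kTAg n (k f : nat) : task n := Task (@kTAg_prob n k) f.

Definition Cons_task n (f : nat) : task n := kTAg n n f.

(** At each step
    a process may receive (at most) one message (sender, content) and (at most)
    one oracle response (consultation index, value); it then moves to a new
    state, sends a list of (destination, content) messages and may submit one
    query to the oracle. *)
Record alg (n : nat) := Alg {
  St : Type;
  Msg : Type;
  init : 'I_n -> bool -> St;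
  step : 'I_n -> St -> option ('I_n * Msg) -> option (nat * bool) ->
         St * seq ('I_n * Msg) * option bool;
  dec : St -> option bool
}.
Arguments init {n} a _ _.
Arguments step {n} a _ _ _ _.
Arguments dec {n} a _.

Record run n (A : alg n) := Run {
  ev : nat -> option 'I_n;            (* process taking a step at time t *)
  rcv : nat -> option (nat * nat);    (* message received at t: id (send time, index) *)
  rsp : nat -> option nat;            (* consultation whose response is delivered at t *)
  st : nat -> 'I_n -> St A;           (* local states at the beginning of time t *)
  out : nat -> seq ('I_n * Msg A);    (* messages sent at time t *)
  qry : nat -> option bool;           (* oracle query submitted at time t *)
  oresp : nat -> bool                 (* common response of each consultation *)
}.

Section RunDefs.
Variables (n : nat) (A : alg n) (R : run A).

Definition minput (t : nat) : option ('I_n * Msg A) :=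
  match rcv R t with
  | Some (s, i) =>
      match ev R s, onth (out R s) i with
      | Some q, Some m => Some (q, m.2)
      | _, _ => None
      end
  | None => None
  end.

Definition rinput (t : nat) : option (nat * bool) :=
  match rsp R t with Some k => Some (k, oresp R k) | None => None end.

(* number of queries submitted by p before time t; the j-th query (from 0)
   of a process belongs to the j-th consultation of the oracle *)
Definition qcount (t : nat) (p : 'I_n) : nat :=
  \sum_(t' < t) ((ev R t' == Some p) && (qry R t' != None)).

Definition queried (k : nat) (p : 'I_n) (b : bool) : Prop :=
  exists t, [/\ ev R t = Some p, qry R t = Some b & qcount t p = k].

Definition queriers (k : nat) : {set 'I_n} :=
  [set p | `[< exists b, queried k p b >]].

Definition extends_qvec (k : nat) (V' : 'I_n -> bool) : Prop :=
  forall p b, queried k p b -> V' p = b.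

Definition run_steps (T2 : task n) (F : fpattern n) (V : 'I_n -> bool) : Prop :=
  [/\
      (forall p, st R 0 p = init A p (V p)),
      (forall t, ev R t = None ->
         [/\ rcv R t = None, rsp R t = None, out R t = [::], qry R t = None
           & st R t.+1 = st R t])
    &
      (forall t p, ev R t = Some p ->
         [/\ p \notin F t,
             st R t.+1 p = (step A p (st R t p) (minput t) (rinput t)).1.1,
             out R t = (step A p (st R t p) (minput t) (rinput t)).1.2,
             qry R t = (step A p (st R t p) (minput t) (rinput t)).2
           & forall p', p' != p -> st R t.+1 p' = st R t p'])].

Definition run_channels (F : fpattern n) : Prop :=
  [/\
      (forall t s i, rcv R t = Some (s, i) ->
         s < t /\ exists p m, ev R t = Some p /\ onth (out R s) i = Some (p, m)),
      (forall t t' x, rcv R t = Some x -> rcv R t' = Some x -> t = t'),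
      (forall s i p m, onth (out R s) i = Some (p, m) -> p \notin Faulty F ->
         exists t, rcv R t = Some (s, i))
    &
      (forall p, p \notin Faulty F -> forall t, exists t', t <= t' /\ ev R t' = Some p)].

Definition run_oracle (T2 : task n) (F : fpattern n) : Prop :=
  [/\
      (forall t k, rsp R t = Some k ->
         exists p, ev R t = Some p /\
           exists t0 b, [/\ t0 < t, ev R t0 = Some p, qry R t0 = Some b
                          & qcount t0 p = k]),
      (forall t t' p k, ev R t = Some p -> ev R t' = Some p ->
         rsp R t = Some k -> rsp R t' = Some k -> t = t'),
      (forall k, (exists t, rsp R t = Some k) ->
         forall V', extends_qvec k V' -> oresp R k \in tprob T2 F V')
    &
      (forall k, n - tres T2 <= #|queriers k| ->
         forall p, p \notin Faulty F -> (exists b, queried k p b) ->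
           exists t, ev R t = Some p /\ rsp R t = Some k)].

(** R is a run of A with initial values V and failure pattern F, in which
    processes may consult the (most general) oracle O.T2. *)
Definition is_run (T2 : task n) (F : fpattern n) (V : 'I_n -> bool) : Prop :=
  [/\ run_steps T2 F V, run_channels F & run_oracle T2 F].

End RunDefs.

Definition solves_with n (A : alg n) (T1 T2 : task n) : Prop :=
  forall (F : fpattern n) (V : 'I_n -> bool) (R : run A),
    nondecreasing F -> #|Faulty F| <= tres T1 -> is_run R T2 F V ->
    [/\
        (forall p, p \notin Faulty F -> exists t d, dec A (st R t p) = Some d),
        (forall p t t' d, t <= t' -> dec A (st R t p) = Some d ->
           dec A (st R t' p) = Some d),
        (forall p q t t' d d', dec A (st R t p) = Some d ->
           dec A (st R t' q) = Some d' -> d = d')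
      &
        (forall p t d, dec A (st R t p) = Some d -> d \in tprob T1 F V)].

Definition C_reducible n (T1 T2 : task n) : Prop :=
  exists A : alg n, solves_with A T1 T2.

(* Split the processes into the blocks B0 = [0, n - f), B1 = [n - f, 2 (n - f))
   and the rest; as n <= 2 f, the complements of B0 and of B1 have exactly f
   processes.  Facing f faulty processes, the f-TAg oracle may always answer 0,
   so it conveys nothing.  In run alpha only B0 is alive and all inputs are 1:
   as f < k, validity makes process 0 decide 1 at some time t1.  In run beta
   only B1 is alive and all inputs are 0: process n - f decides 0 at some t2.
   In run gamma B0 and B1 are alive but exchange no message before
   D = t1 + t2, when B0 crashes; up to D, B0 cannot tell gamma from alpha nor
   B1 gamma from beta, so the two decisions contradict agreement. *)

From mathcomp Require Import all_boot.
From mathcomp Require Import boolp.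
From mathcomp Require Import zify.
From Stdlib Require List.

Set Implicit Arguments.
Unset Strict Implicit.
Unset Printing Implicit Defensive.

(* Pending messages carry contents of an arbitrary type, so lists of them are
   not eqType lists and membership is [List.In]; seq's [filter], [cat] and
   [has] are convertible to [List.filter], [List.app] and [List.existsb]. *)
Section ListIn.
Variable T : Type.

Lemma has_In (P : pred T) s : has P s <-> exists x, List.In x s /\ P x.
Proof. exact: List.existsb_exists. Qed.

Lemma ohead_filter_In (P : pred T) s e :
  ohead (filter P s) = Some e -> List.In e s /\ P e.
Proof.
move=> He; apply: (iffLR (List.filter_In P e s)); change (List.In e (filter P s)).
by move: He; case: (filter P s) => //= y s' [<-]; left.
Qed.

Lemma filter_In_nil (P : pred T) s :
  (forall x, List.In x s -> P x = false) -> filter P s = [::].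
Proof. by move=> H; rewrite -(List.filter_false s); apply: List.filter_ext_in. Qed.

Lemma filterC (P Q : pred T) s : filter P (filter Q s) = filter Q (filter P s).
Proof. by rewrite -!filter_predI; apply: eq_filter => x /=; rewrite andbC. Qed.

End ListIn.

Section Rank.
Variables (T : Type) (X : eqType) (key : T -> nat * nat) (dst : T -> X).

Definition rank (x : nat * nat) (p : X) (s : seq T) :=
  count (fun e => dst e == p) (take (find (fun e => key e == x) s) s).

Lemma take_find_filter (P k : pred T) s : (forall e, List.In e s -> P e -> k e) ->
  take (find P (filter k s)) (filter k s) = filter k (take (find P s) s).
Proof.
elim: s => [|e s IH] //= H.
have IH' : forall e, List.In e s -> P e -> k e by move=> e' He'; apply: H; right.
case Ke: (k e) => /=.
- by case: (P e) => //=; rewrite Ke IH.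
- have -> : P e = false by apply/negP => /(H e (or_introl erefl)); rewrite Ke.
  by rewrite /= Ke IH.
Qed.

Lemma rank_filter x p (k : pred T) s :
  (forall e, List.In e s -> key e == x -> k e) -> rank x p (filter k s) <= rank x p s.
Proof.
move=> H; rewrite /rank take_find_filter // count_filter.
by apply: sub_count => e /andP [].
Qed.

Lemma rank_cat x p s1 s2 :
  has (fun e => key e == x) s1 -> rank x p (s1 ++ s2) = rank x p s1.
Proof. by move=> H; rewrite /rank find_cat H take_cat -has_find H. Qed.

Lemma has_key_filter x (k : pred T) s : (forall e, List.In e s -> key e == x -> k e) ->
  has (fun e => key e == x) s -> has (fun e => key e == x) (filter k s).
Proof.
move=> H /has_In [e [He Hx]]; apply/has_In; exists e; split=> //.
by apply/List.filter_In; split=> //; apply: H.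
Qed.

Lemma rank_first_lt x p s : has (fun e => key e == x) s ->
  (forall e, List.In e s -> key e == x -> dst e == p) ->
  (forall e e', List.In e s -> List.In e' s -> key e = key e' -> dst e = dst e') ->
  exists e, ohead (filter (fun e => dst e == p) s) = Some e /\
    (key e = x \/ rank x p (filter (fun e' => key e' != key e) s) < rank x p s).
Proof.
elim: s => [|e0 s IH] //= Hh Hd Hu.
have Hd' : forall e, List.In e s -> key e == x -> dst e == p by move=> e He; apply: Hd; right.
have Hu' : forall e e', List.In e s -> List.In e' s -> key e = key e' -> dst e = dst e'.
  by move=> e e' He He'; apply: Hu; right.
case: (eqVneq (key e0) x) => Hx.
  by exists e0; rewrite (Hd e0 (or_introl erefl)) ?Hx //=; split=> //; left.
case: ifP => Hd0.
  exists e0; split=> //; right.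
  rewrite /= eqxx /rank /= (negbTE Hx) /= Hd0 add1n ltnS.
  apply: (@rank_filter x p (fun e' => key e' != key e0)) => e He /eqP Hex.
  by apply/eqP => Hk; rewrite -Hk Hex eqxx in Hx.
rewrite /= (negbTE Hx) in Hh.
have [e [He Hor]] := IH Hh Hd' Hu'.
exists e; split=> //; case: Hor => [->|Hlt]; first by left.
right; have Hne : key e0 != key e.
  have [He' /eqP Hp] := ohead_filter_In He.
  apply/eqP => Hk; have := Hu e0 e (or_introl erefl) (or_intror He') Hk.
  by move=> Hde; rewrite Hde Hp eqxx in Hd0.
by rewrite /= Hne /rank /= (negbTE Hx) /= Hd0.
Qed.

End Rank.

(* A concrete scheduler for an arbitrary algorithm [A]: a run in which the
   oracle always answers 0 ([false]).  Processes are scheduled round robin and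
   skip their turn when not [alive]; a scheduled process receives the oldest
   pending message addressed to it that is deliverable (before time [D] only
   messages from its own block [gid], afterwards all of them) together with the
   response to its pending query.  [p0] only witnesses that ['I_n] is inhabited. *)
Section Simulation.
Variables (n : nat) (A : alg n) (p0 : 'I_n).

(* [mid] identifies a message as in [rcv]: (send time, index in the outbox). *)
Record pmsg := PMsg { mid : nat * nat; msrc : 'I_n; mdst : 'I_n; mbody : Msg A }.
(* [cawait c p = Some k]: [p] submitted a query of consultation [k] and has
   not yet received the response; [cqueries c p] counts the queries of [p]. *)
Record config := Config { cstate : 'I_n -> St A; cpending : seq pmsg;
                          cawait : 'I_n -> option nat; cqueries : 'I_n -> nat }.
Record transition := Transition { tnext : config; trcv : option (nat * nat);
  trsp : option nat; tout : seq ('I_n * Msg A); tqry : option bool }.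

Fixpoint outbox (t : nat) (p : 'I_n) (i : nat) (o : seq ('I_n * Msg A)) : seq pmsg :=
  match o with [::] => [::] | x :: o' => PMsg (t, i) p x.1 x.2 :: outbox t p i.+1 o' end.

Variables (alive : nat -> 'I_n -> bool) (D : nat) (gid : 'I_n -> nat) (V : 'I_n -> bool).

Definition scheduled (t : nat) : 'I_n := insubd p0 (t %% n).
Definition sched t := if alive t (scheduled t) then Some (scheduled t) else None.
Definition deliverable t (p : 'I_n) (e : pmsg) :=
  (mdst e == p) && ((D <= t) || (gid (msrc e) == gid p)).

Definition sim_step t (c : config) : transition :=
  match sched t with
  | None => Transition c None None [::] None
  | Some p =>
    let sel := ohead (filter (deliverable t p) (cpending c)) in
    let mi := omap (fun e => (msrc e, mbody e)) sel in
    let ri := omap (fun k => (k, false)) (cawait c p) in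
    let r := step A p (cstate c p) mi ri in
    let pend := if sel is Some e then filter (fun e' => mid e' != mid e) (cpending c)
                else cpending c in
    Transition
      (Config (fun q => if q == p then r.1.1 else cstate c q)
              (pend ++ outbox t p 0 r.1.2)
              (fun q => if q == p then (if r.2 is Some _ then Some (cqueries c p) else None)
                        else cawait c q)
              (fun q => if q == p then cqueries c p + (r.2 != None) else cqueries c q))
      (omap mid sel) (cawait c p) r.1.2 r.2
  end.

Fixpoint sim_cfg t : config :=
  match t with
  | 0 => Config (fun p => init A p (V p)) [::] (fun _ => None) (fun _ => 0)
  | t'.+1 => tnext (sim_step t' (sim_cfg t'))
  end.

Definition sim_run : run A :=
  Run sched (fun t => trcv (sim_step t (sim_cfg t))) (fun t => trsp (sim_step t (sim_cfg t)))
      (fun t => cstate (sim_cfg t)) (fun t => tout (sim_step t (sim_cfg t)))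
      (fun t => tqry (sim_step t (sim_cfg t))) (fun _ => false).

Lemma sim_cfgS t : sim_cfg t.+1 = tnext (sim_step t (sim_cfg t)). Proof. by []. Qed.

Lemma In_outbox t p i o e : List.In e (outbox t p i o) ->
  exists j, [/\ mid e = (t, i + j), msrc e = p & onth o j = Some (mdst e, mbody e)].
Proof.
elim: o i => [|x o IH] i //= [<-|/IH [j [-> -> Ho]]].
- by exists 0; rewrite addn0; case: x.
- by exists j.+1; rewrite addnS.
Qed.

Lemma outbox_In t p i o j d m : onth o j = Some (d, m) ->
  List.In (PMsg (t, i + j) p d m) (outbox t p i o).
Proof.
elim: o i j => [|x o IH] i [|j] //=.
- by move=> [->]; left; rewrite addn0.
- by move=> /IH H; right; rewrite -addSnnS; apply: H.
Qed.

Lemma schedP t p : sched t = Some p -> alive t p /\ scheduled t = p.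
Proof. by rewrite /sched; case: ifP => // H [<-]. Qed.

Lemma sim_step_idle t c : sched t = None -> sim_step t c = Transition c None None [::] None.
Proof. by rewrite /sim_step => ->. Qed.

Lemma qcountS t p : qcount sim_run t.+1 p =
  qcount sim_run t p + ((sched t == Some p) && (tqry (sim_step t (sim_cfg t)) != None)).
Proof. by rewrite /qcount big_ord_recr. Qed.

Lemma cqueries_qcount t p : cqueries (sim_cfg t) p = qcount sim_run t p.
Proof.
elim: t => [|t IH]; first by rewrite /qcount big_ord0.
rewrite qcountS sim_cfgS /sim_step; case E: (sched t) => [q|] /=; last by rewrite addn0.
case: eqP => [<-|/eqP Hne]; first by rewrite eqxx /= IH.
have -> : (Some q == Some p) = false by apply/eqP => -[] /eqP; rewrite eq_sym (negbTE Hne).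
by rewrite IH addn0.
Qed.

Definition sent_before t (e : pmsg) :=
  [/\ (mid e).1 < t, sched (mid e).1 = Some (msrc e) &
      onth (tout (sim_step (mid e).1 (sim_cfg (mid e).1))) (mid e).2 = Some (mdst e, mbody e)].

Lemma pending_sent_before t e : List.In e (cpending (sim_cfg t)) -> sent_before t e.
Proof.
elim: t e => [|t IH] e //=.
rewrite /sim_step; case E: (sched t) => [q|] /=; last first.
  by move=> /IH [H1 H2 H3]; split=> //; exact: ltnW.
case/List.in_app_iff.
- case: ohead => [e0|] => [/List.filter_In [] |];
    by move=> /IH [H1 H2 H3] *; split=> //; exact: ltnW.
- case/In_outbox => j [Hid Hs Ho]; rewrite /sent_before Hid /= Hs E; split=> //.
  by rewrite /sim_step E.
Qed.

Lemma sent_before_mdst t t' e e' :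
  sent_before t e -> sent_before t' e' -> mid e = mid e' -> mdst e = mdst e'.
Proof. by case=> _ _ H [_ _ H'] Heq; move: H; rewrite Heq H' => -[]. Qed.

Lemma pending_sim_step t c e : List.In e (cpending (tnext (sim_step t c))) ->
  (List.In e (cpending c) /\ trcv (sim_step t c) <> Some (mid e)) \/ (mid e).1 = t.
Proof.
rewrite /sim_step; case E: (sched t) => [q|] /=; last by left.
case/List.in_app_iff.
- case Es: ohead => [e0|] /=.
  + by case/List.filter_In => He /eqP Hne; left; split=> // -[] /esym.
  + by left.
- by case/In_outbox => j [-> _ _]; right.
Qed.

Lemma pending_not_received t e : List.In e (cpending (sim_cfg t)) ->
  forall w, (mid e).1 < w < t -> trcv (sim_step w (sim_cfg w)) <> Some (mid e).
Proof.
elim: t e => [|t IH] e //= /pending_sim_step [[He Hr]|He] w /andP [H1 H2]; last first.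
  by rewrite He in H1; rewrite ltnS leqNgt H1 in H2.
rewrite ltnS leq_eqVlt in H2; case/orP: H2 => [/eqP ->|H2] //.
by apply: IH => //; rewrite H1.
Qed.

Lemma sim_step_other t c p : sched t <> Some p ->
  [/\ cstate (tnext (sim_step t c)) p = cstate c p,
      cawait (tnext (sim_step t c)) p = cawait c p
    & cqueries (tnext (sim_step t c)) p = cqueries c p].
Proof.
rewrite /sim_step; case: (sched t) => [q|] //= Hq.
have -> : (p == q) = false by apply/eqP => Hpq; apply: Hq; rewrite Hpq.
by [].
Qed.

Lemma cawait_queried t p k : cawait (sim_cfg t) p = Some k ->
  exists t0 b, [/\ t0 < t, sched t0 = Some p, tqry (sim_step t0 (sim_cfg t0)) = Some b,
     qcount sim_run t0 p = k & forall u, t0 < u < t -> sched u <> Some p].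
Proof.
elim: t => [|t IH] //=.
case: (eqVneq (sched t) (Some p)) => [E|E].
- rewrite /sim_step E /= eqxx.
  case Eq: (step _ _ _ _ _).2 => [b|] // -[<-].
  exists t, b; split=> //; first (by rewrite /sim_step E); first by rewrite cqueries_qcount.
  by move=> u /andP [H1 H2]; rewrite ltnS leqNgt H1 in H2.
- have [_ -> _] := sim_step_other (sim_cfg t) (elimN eqP E).
  case/IH => t0 [b [H1 H2 H3 H4 H5]]; exists t0, b; split=> //; first exact: ltnW.
  move=> u /andP [Hu1]; rewrite ltnS leq_eqVlt => /orP [/eqP ->|Hu2].
  + exact/eqP.
  + by apply: H5; rewrite Hu1.
Qed.

Lemma cawait_after_query t0 p b :
  sched t0 = Some p -> tqry (sim_step t0 (sim_cfg t0)) = Some b ->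
  forall u, t0 < u -> (forall w, t0 < w < u -> sched w <> Some p) ->
  cawait (sim_cfg u) p = Some (qcount sim_run t0 p).
Proof.
move=> E Q; elim=> [|u IH] // Hu Hw.
rewrite ltnS leq_eqVlt in Hu; case/orP: Hu => [/eqP <-|Hu].
- rewrite /= {1}/sim_step E /= eqxx; move: Q; rewrite /sim_step E /= => ->.
  by rewrite cqueries_qcount.
- have Hu' : sched u <> Some p by apply: Hw; rewrite Hu ltnSn.
  rewrite /=; have [_ -> _] := sim_step_other (sim_cfg u) Hu'.
  by apply: IH => // w /andP [H1 H2]; apply: Hw; rewrite H1 ltnS ltnW.
Qed.

Lemma scheduled_val t : val (scheduled t) = t %% n.
Proof. by rewrite /scheduled val_insubd ltn_pmod // (leq_ltn_trans (leq0n _) (ltn_ord p0)). Qed.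

Lemma sched_infinitely_often p T : (forall t, T <= t -> alive t p) ->
  forall u, exists2 t, u <= t & sched t = Some p.
Proof.
move=> HT u; have n0 : 0 < n by apply: leq_ltn_trans (ltn_ord p0).
pose t := (u + T) * n + p.
have Hpt : scheduled t = p by apply: val_inj; rewrite scheduled_val /t modnMDl modn_small.
have Hut : u + T <= t.
  by rewrite /t (leq_trans _ (leq_addr _ _)) // leq_pmulr.
exists t; first exact: leq_trans (leq_addr _ _) Hut.
by rewrite /sched Hpt HT // (leq_trans (leq_addl _ _) Hut).
Qed.

Notation pending_has x s := (has (fun e => mid e == x) s).

Lemma rank_sim_step_le t x p :
  (forall e, List.In e (cpending (sim_cfg t)) -> mid e = x -> mdst e = p) ->
  pending_has x (cpending (sim_cfg t)) ->
  trcv (sim_step t (sim_cfg t)) = Some x \/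
  (pending_has x (cpending (sim_cfg t.+1)) /\
   rank mid mdst x p (cpending (sim_cfg t.+1)) <= rank mid mdst x p (cpending (sim_cfg t))).
Proof.
move=> Hd Hh; rewrite /= /sim_step; case E: (sched t) => [q|] /=; last by right.
case Es: ohead => [e0|] /=; last first.
  by right; rewrite has_cat Hh rank_cat.
case: (eqVneq (mid e0) x) => Hx; first by left; rewrite Hx.
right.
have Hk : forall e, List.In e (cpending (sim_cfg t)) -> mid e == x -> mid e != mid e0.
  by move=> e _ /eqP ->; rewrite eq_sym.
have Hh' := has_key_filter Hk Hh.
by rewrite has_cat Hh' rank_cat // rank_filter.
Qed.

Lemma rank_sim_step_lt t x p : D <= t -> sched t = Some p ->
  (forall e, List.In e (cpending (sim_cfg t)) -> mid e = x -> mdst e = p) ->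
  pending_has x (cpending (sim_cfg t)) ->
  trcv (sim_step t (sim_cfg t)) = Some x \/
  (pending_has x (cpending (sim_cfg t.+1)) /\
   rank mid mdst x p (cpending (sim_cfg t.+1)) < rank mid mdst x p (cpending (sim_cfg t))).
Proof.
move=> HD E Hd Hh; rewrite /= /sim_step E /=.
have -> : filter (deliverable t p) (cpending (sim_cfg t)) =
          filter (fun e => mdst e == p) (cpending (sim_cfg t)).
  by apply: eq_filter => e; rewrite /deliverable HD /= andbT.
have Hu : forall e e', List.In e (cpending (sim_cfg t)) -> List.In e' (cpending (sim_cfg t)) ->
    mid e = mid e' -> mdst e = mdst e'.
  by move=> e e' /pending_sent_before He /pending_sent_before He'; apply: sent_before_mdst He He'.
have Hd' : forall e, List.In e (cpending (sim_cfg t)) -> mid e == x -> mdst e == p.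
  by move=> e He /eqP Hx; rewrite (Hd e He Hx).
have [e [-> Hor]] := rank_first_lt Hh Hd' Hu.
case: (eqVneq (mid e) x) => Hx; first by left; rewrite /= Hx.
case: Hor => [/eqP|Hlt]; first by rewrite (negbTE Hx).
right.
have Hk : forall e', List.In e' (cpending (sim_cfg t)) -> mid e' == x -> mid e' != mid e.
  by move=> e' _ /eqP ->; rewrite eq_sym.
have Hh' := has_key_filter Hk Hh.
by rewrite /= has_cat Hh' rank_cat.
Qed.

Lemma pending_rank_nonincreasing x p u u' : u <= u' ->
  (forall e t, List.In e (cpending (sim_cfg t)) -> mid e = x -> mdst e = p) ->
  pending_has x (cpending (sim_cfg u)) ->
  (exists t, trcv (sim_step t (sim_cfg t)) = Some x) \/
  (pending_has x (cpending (sim_cfg u')) /\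
   rank mid mdst x p (cpending (sim_cfg u')) <= rank mid mdst x p (cpending (sim_cfg u))).
Proof.
move=> /subnKC <-; elim: (u' - u) => [|d IH] Hd Hh; first by right; rewrite addn0.
case: (IH Hd Hh) => [|[Hh' Hle]]; first by left.
case: (rank_sim_step_le (fun e He => Hd e _ He) Hh') => [Hr|[Hh'' Hle']].
  by left; eexists; apply: Hr.
by right; rewrite addnS; split=> //; apply: leq_trans Hle' Hle.
Qed.

(* Induction on the rank of [x]: it never increases, and it decreases at each
   step of [p] after [D] that does not deliver [x]. *)
Lemma pending_received x p T u : (forall t, T <= t -> alive t p) ->
  (forall e t, List.In e (cpending (sim_cfg t)) -> mid e = x -> mdst e = p) ->
  pending_has x (cpending (sim_cfg u)) -> exists t, trcv (sim_step t (sim_cfg t)) = Some x.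
Proof.
move=> HT Hd Hh; move: {2}(rank _ _ _ _ _) (leqnn (rank mid mdst x p (cpending (sim_cfg u)))).
move=> N; elim: N u Hh => [|N IHN] u Hh Hr.
all: have [ts Hts Es] := sched_infinitely_often HT (maxn u D).
all: rewrite geq_max in Hts; case/andP: Hts => Hut HDt.
all: case: (pending_rank_nonincreasing Hut Hd Hh) => [//|[Hh' Hle]].
all: case: (rank_sim_step_lt HDt Es (fun e He => Hd e ts He) Hh') => [Hx|[Hh'' Hlt]];
  first by exists ts.
- by move: (leq_trans Hlt (leq_trans Hle Hr)).
- by apply: (IHN ts.+1 Hh''); rewrite -ltnS (leq_trans Hlt) // (leq_trans Hle Hr).
Qed.

Lemma minput_sim t p : sched t = Some p ->
  minput sim_run t =
  omap (fun e => (msrc e, mbody e)) (ohead (filter (deliverable t p) (cpending (sim_cfg t)))).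
Proof.
move=> E; rewrite /minput /=.
have -> : trcv (sim_step t (sim_cfg t)) =
          omap mid (ohead (filter (deliverable t p) (cpending (sim_cfg t)))).
  by rewrite /sim_step E.
case Es: ohead => [e|] //=.
have [He _] := ohead_filter_In Es.
have [H1 H2 H3] := pending_sent_before He.
move: H2 H3; case: (mid e) => s i /= -> ->; by [].
Qed.

Lemma rinput_sim t p : sched t = Some p ->
  rinput sim_run t = omap (fun k => (k, false)) (cawait (sim_cfg t) p).
Proof. by move=> E; rewrite /rinput /= /sim_step E /=; case: cawait. Qed.

Lemma trcv_pending t x : trcv (sim_step t (sim_cfg t)) = Some x ->
  exists e, [/\ List.In e (cpending (sim_cfg t)), mid e = x & sched t = Some (mdst e)].
Proof.
rewrite /sim_step; case E: (sched t) => [q|] //=.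
case Es: ohead => [e|] //= [<-].
have [He /andP [/eqP Hd _]] := ohead_filter_In Es.
by exists e; rewrite Hd.
Qed.

Lemma leq_qcount a b p : a <= b -> qcount sim_run a p <= qcount sim_run b p.
Proof.
elim: b => [|b IH]; first by rewrite leqn0 => /eqP ->.
rewrite leq_eqVlt => /orP [/eqP ->|]; first by [].
rewrite ltnS => /IH H; rewrite qcountS; exact: leq_trans H (leq_addr _ _).
Qed.

Section RunProperties.
Variables (T2 : task n) (F : fpattern n).
Hypothesis alive_correct : forall t p, alive t p -> p \notin F t.
Hypothesis eventually_alive :
  forall p, p \notin Faulty F -> exists T, forall t, T <= t -> alive t p.

Lemma sim_run_steps : run_steps sim_run T2 F V.
Proof.
split=> // [t E|t p E0]; first by rewrite /= sim_step_idle.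
have E : sched t = Some p := E0; have [Ha _] := schedP E.
rewrite (minput_sim E) (rinput_sim E) /= /sim_step E /= eqxx; split=> //.
- exact: alive_correct.
- by move=> p' Hp'; rewrite (negbTE Hp').
Qed.

Lemma sim_received_once t t' x : trcv (sim_step t (sim_cfg t)) = Some x ->
  trcv (sim_step t' (sim_cfg t')) = Some x -> t = t'.
Proof.
move=> Hr Hr'.
have [e [He Hx _]] := trcv_pending Hr; have [e' [He' Hx' _]] := trcv_pending Hr'.
have [H1 _ _] := pending_sent_before He; have [H1' _ _] := pending_sent_before He'.
rewrite Hx in H1; rewrite Hx' in H1'.
case: (ltngtP t t') => // Htt; exfalso.
- by apply: (pending_not_received He' (w := t)); rewrite Hx' ?H1 ?Htt.
- by apply: (pending_not_received He (w := t')); rewrite Hx ?H1' ?Htt.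
Qed.

Lemma sim_reliable s i p m : onth (out sim_run s) i = Some (p, m) -> p \notin Faulty F ->
  exists t, trcv (sim_step t (sim_cfg t)) = Some (s, i).
Proof.
move=> Ho Hp; have [T HT] := eventually_alive Hp.
case Es: (sched s) => [q|]; last by move: Ho; rewrite /= sim_step_idle //=; case: i.
have Hin : List.In (PMsg (s, i) q p m) (cpending (sim_cfg s.+1)).
  rewrite /= {1}/sim_step Es /=; apply/List.in_app_iff; right.
  by have := @outbox_In s q 0 _ i p m; rewrite add0n; apply; move: Ho; rewrite /= /sim_step Es.
apply: (pending_received (u := s.+1) HT).
- move=> e t He Hx; have [_ _ Hse] := pending_sent_before He.
  by move: Hse Ho; rewrite Hx /= => -> [].
- by apply/has_In; exists (PMsg (s, i) q p m); split.
Qed.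

Lemma sim_run_channels : run_channels sim_run F.
Proof.
split=> [t s i /trcv_pending [e [He Hx Ed]]|t t' x|s i p m|p Hp t].
- have [H1 _ H3] := pending_sent_before He.
  by move: H1 H3; rewrite Hx /= => H1 H3; split=> //; exists (mdst e), (mbody e).
- exact: sim_received_once.
- exact: sim_reliable.
- have [T HT] := eventually_alive Hp.
  by have [t' ? ?] := sched_infinitely_often HT t; exists t'.
Qed.

Lemma trsp_cawait u p : sched u = Some p ->
  trsp (sim_step u (sim_cfg u)) = cawait (sim_cfg u) p.
Proof. by move=> Eu; rewrite /sim_step Eu. Qed.

(* Between two steps of [p] awaiting consultation [k], [p] queried [k] anew,
   which would make its query count exceed [k]. *)
Lemma sim_response_once t t' p k : sched t = Some p -> sched t' = Some p ->
  trsp (sim_step t (sim_cfg t)) = Some k -> trsp (sim_step t' (sim_cfg t')) = Some k ->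
  t = t'.
Proof.
have once a a' : a < a' -> sched a = Some p -> cawait (sim_cfg a) p = Some k ->
    cawait (sim_cfg a') p = Some k -> False.
  move=> Ha Ea /cawait_queried [t0 [b [H1 H2 H3 H4 _]]].
  move=> /cawait_queried [t0' [b' [_ _ _ H4' H5']]].
  have Hat : a <= t0'.
    by rewrite leqNgt; apply/negP => Hlt; apply: (H5' a); rewrite ?Hlt ?Ha.
  have := leq_qcount p (leq_trans H1 Hat).
  by rewrite qcountS H2 eqxx H3 /= H4' H4 addn1 ltnn.
move=> E E'; rewrite (trsp_cawait E) (trsp_cawait E') => Hk Hk'.
by case: (ltngtP t t') => // Htt; exfalso; [apply: (once t t')|apply: (once t' t)].
Qed.

Lemma sim_response_delivered t0 p b : p \notin Faulty F -> sched t0 = Some p ->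
  tqry (sim_step t0 (sim_cfg t0)) = Some b ->
  exists t, sched t = Some p /\ trsp (sim_step t (sim_cfg t)) = Some (qcount sim_run t0 p).
Proof.
move=> Hp E Q; have [T HT] := eventually_alive Hp.
have Hex : exists t1, (t0 < t1) && (sched t1 == Some p).
  by have [t1 H1 H2] := sched_infinitely_often HT t0.+1; exists t1; rewrite H1 H2 eqxx.
case: (ex_minnP Hex) => t1 /andP [H1 /eqP H2] Hmin.
exists t1; rewrite (trsp_cawait H2) (cawait_after_query E Q H1) //.
move=> w /andP [Hw1 Hw2] Ew.
by have := Hmin w; rewrite Hw1 Ew eqxx leqNgt Hw2 => /(_ erefl).
Qed.

Lemma sim_run_oracle : (forall V', false \in tprob T2 F V') -> run_oracle sim_run T2 F.
Proof.
move=> false_valid; split=> [t k|t t' p k|k _ V' _|k _ p Hp [b [t0 [E0 Q0 <-]]]].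
- rewrite /= /sim_step; case E: (sched t) => [p|] //= /cawait_queried.
  by move=> [t0 [b [H1 H2 H3 H4 _]]]; exists p; split=> //; exists t0, b.
- exact: sim_response_once.
- exact: false_valid.
- exact: (sim_response_delivered Hp E0 Q0).
Qed.

Lemma sim_is_run : (forall V', false \in tprob T2 F V') -> is_run sim_run T2 F V.
Proof.
by move=> false_valid; split; [apply: sim_run_steps|apply: sim_run_channels|apply: sim_run_oracle].
Qed.

End RunProperties.

End Simulation.

(* Up to time [T <= D1], a block [g] cannot tell a run from a run in which
   only [g] is ever alive: messages from outside [g] are not yet deliverable,
   and its own messages are delivered in the same order. *)
Section BlockIndistinguishability.
Variables (n : nat) (A : alg n) (p0 : 'I_n) (gid : 'I_n -> nat) (g : nat).
Variables (al1 al2 : nat -> 'I_n -> bool) (D1 T : nat) (V1 V2 : 'I_n -> bool).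
Hypotheses (leq_T_D1 : T <= D1)
  (alive_agree : forall t p, t < T -> gid p == g -> al1 t p = al2 t p)
  (alive2_block : forall t p, al2 t p -> gid p == g)
  (init_agree : forall p, gid p == g -> V1 p = V2 p).

Definition internal (e : pmsg A) := (gid (msrc e) == g) && (gid (mdst e) == g).

Definition block_agree (c c' : config A) :=
  (forall p, gid p == g -> [/\ cstate c p = cstate c' p, cawait c p = cawait c' p
                             & cqueries c p = cqueries c' p]) /\
  filter internal (cpending c) = filter internal (cpending c').

Let c1 t := sim_cfg A p0 al1 D1 gid V1 t.
Let c2 t := sim_cfg A p0 al2 0 gid V2 t.

Lemma isolated_pending_src t e : List.In e (cpending (c2 t)) -> gid (msrc e) == g.
Proof. by move/pending_sent_before => [_ /schedP [/alive2_block]]. Qed.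

Lemma block_agree_step_inside t : t < T -> gid (scheduled p0 t) == g ->
  block_agree (c1 t) (c2 t) -> block_agree (c1 t.+1) (c2 t.+1).
Proof.
move=> Ht Hq [IHs IHp]; rewrite /c1 /c2 !sim_cfgS -/(c1 t) -/(c2 t).
set q := scheduled p0 t in Hq *.
case Ea: (al2 t q); last first.
  have E2 : sched p0 al2 t = None by rewrite /sched -/q Ea.
  have E1 : sched p0 al1 t = None by rewrite /sched -/q alive_agree // Ea.
  by rewrite !sim_step_idle.
have E2 : sched p0 al2 t = Some q by rewrite /sched -/q Ea.
have E1 : sched p0 al1 t = Some q by rewrite /sched -/q alive_agree // Ea.
have Hsel : ohead (filter (deliverable D1 gid t q) (cpending (c1 t))) =
            ohead (filter (deliverable 0 gid t q) (cpending (c2 t))).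
  have -> : filter (deliverable D1 gid t q) (cpending (c1 t)) =
            filter (fun e => mdst e == q) (filter internal (cpending (c1 t))).
    rewrite -filter_predI; apply: eq_filter => e /=.
    rewrite /deliverable /internal leqNgt (leq_trans Ht leq_T_D1) /= (eqP Hq).
    by case: eqP => //= ->; rewrite Hq andbT.
  have -> : filter (deliverable 0 gid t q) (cpending (c2 t)) =
            filter (fun e => mdst e == q) (filter internal (cpending (c2 t))).
    rewrite -filter_predI; apply: List.filter_ext_in => e He /=.
    rewrite /deliverable /internal /= (isolated_pending_src He) /=.
    by case: eqP => //= ->; rewrite Hq.
  by rewrite IHp.
have [Hs Hpq Hqc] := IHs q Hq.
rewrite /sim_step E1 E2 /= Hsel Hs Hpq Hqc; split.
- by move=> p Hp /=; have [Hs' Hpq' Hqc'] := IHs p Hp; case: eqP.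
- rewrite !filter_cat; congr (_ ++ _).
  by case: ohead => [e|] //; rewrite filterC IHp -filterC.
Qed.

Lemma block_agree_step_outside t : gid (scheduled p0 t) != g ->
  block_agree (c1 t) (c2 t) -> block_agree (c1 t.+1) (c2 t.+1).
Proof.
move=> Hq [IHs IHp]; rewrite /c1 /c2 !sim_cfgS -/(c1 t) -/(c2 t).
set q := scheduled p0 t in Hq.
have E2 : sched p0 al2 t = None.
  by rewrite /sched -/q; case: ifP => // /alive2_block; rewrite (negbTE Hq).
rewrite (@sim_step_idle _ _ p0 al2 0 gid t (c2 t) E2).
case E1: (sched p0 al1 t) => [q'|]; last by rewrite sim_step_idle.
have Hq' : q' = q by have [_ <-] := schedP E1.
split.
  move=> p Hp; have Hne : sched p0 al1 t <> Some p.
    by rewrite E1 Hq' => -[Hpq]; rewrite Hpq Hp in Hq.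
  by have [-> -> ->] := sim_step_other D1 gid (c1 t) Hne; apply: IHs.
rewrite -IHp /sim_step E1 /= filter_cat.
rewrite (@filter_In_nil _ internal (outbox _ _ _ _)) ?cats0; last first.
  move=> e /In_outbox [j [_ Hs _]]; rewrite /internal Hs Hq'; apply/negbTE.
  by rewrite negb_and Hq.
case Es: ohead => [e|] //.
(* the message [q] receives is addressed to [q], hence not internal *)
rewrite filterC; apply/all_filterP/List.forallb_forall => e' /List.filter_In [He' Pe'].
apply/eqP => Hid; have [He /andP [/eqP Hd _]] := ohead_filter_In Es.
have := sent_before_mdst (pending_sent_before He') (pending_sent_before He) Hid.
rewrite Hd Hq' => Hdst; move: Pe'; rewrite /internal Hdst.
by rewrite (negbTE Hq) andbF.
Qed.

Lemma block_agree_sim_cfg t : t <= T -> block_agree (c1 t) (c2 t).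
Proof.
elim: t => [|t IH] Ht; first by split=> // p Hp; rewrite /c1 /c2 /= init_agree.
case: (boolP (gid (scheduled p0 t) == g)) => Hq.
- exact: (block_agree_step_inside Ht Hq (IH (ltnW Ht))).
- exact: (block_agree_step_outside Hq (IH (ltnW Ht))).
Qed.

Lemma sim_state_block_agree t p : t <= T -> gid p == g ->
  cstate (c1 t) p = cstate (c2 t) p.
Proof. by move=> Ht Hp; have [/(_ p Hp) []] := block_agree_sim_cfg Ht. Qed.

End BlockIndistinguishability.

Lemma card_ord_lt n m : m <= n -> #|[set p : 'I_n | p < m]| = m.
Proof.
move=> Hm; have -> : [set p : 'I_n | p < m] = [set widen_ord Hm i | i in 'I_m].
  apply/setP => p; rewrite inE; apply/idP/imsetP.
  - by move=> Hp; exists (Ordinal Hp) => //; apply: val_inj.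
  - by case=> i _ ->; rewrite /= ltn_ord.
by rewrite card_imset ?card_ord // => i j /(congr1 val) /= /val_inj.
Qed.

Lemma card_ord_range n a b : a <= b -> b <= n -> #|[set p : 'I_n | a <= p < b]| = b - a.
Proof.
move=> Hab Hb.
have -> : [set p : 'I_n | a <= p < b] = [set p : 'I_n | p < b] :\: [set p : 'I_n | p < a].
  by apply/setP => p; rewrite !inE -leqNgt andbC.
rewrite cardsD (setIidPr _) ?card_ord_lt ?(leq_trans Hab Hb) //.
by apply/subsetP => p; rewrite !inE => /leq_trans/(_ Hab).
Qed.

Lemma Faulty_eq n (F : fpattern n) (S : {set 'I_n}) :
  (forall p, p \in S -> exists t, p \in F t) -> (forall t p, p \in F t -> p \in S) ->
  Faulty F = S.
Proof.
move=> H1 H2; apply/setP => p; rewrite inE; apply/asboolP/idP; last exact: H1.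
by case=> t /H2.
Qed.

Lemma kTAg_false_valid n k (F : fpattern n) V :
  k <= #|Faulty F| -> false \in kTAg_prob k F V.
Proof.
move=> HF; rewrite /kTAg_prob; case: ifP => _; first by rewrite inE.
by rewrite ltnNge HF andbF inE.
Qed.

Lemma kTAg_all_ones n k (F : fpattern n) (V : 'I_n -> bool) : (forall p, V p) ->
  0 < k -> #|Faulty F| < k -> kTAg_prob k F V = [set true].
Proof.
move=> V1 k_gt0 HF; rewrite /kTAg_prob HF andbT.
have -> : #|[set p | ~~ V p]| = 0.
  by apply/eqP; rewrite cards_eq0; apply/eqP/setP => p; rewrite !inE V1.
by rewrite leqNgt k_gt0; case: forallP.
Qed.

Lemma kTAg_all_zeros n k (F : fpattern n) (V : 'I_n -> bool) : (forall p, ~~ V p) ->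
  k <= n -> kTAg_prob k F V = [set false].
Proof.
move=> V0 k_le_n; rewrite /kTAg_prob.
have -> : [set p | ~~ V p] = setT by apply/setP => p; rewrite !inE V0.
by rewrite cardsT card_ord k_le_n.
Qed.

Section Impossibility.
Variables (n f k : nat).
Hypotheses (f_gt0 : 0 < f) (f_lt_k : f < k) (k_le_n : k <= n) (n_le_2f : n <= 2 * f).

Definition block (p : 'I_n) : nat :=
  if p < n - f then 0 else if p < 2 * (n - f) then 1 else 2.

Lemma card_block_ne0 : #|[set p | block p != 0]| = f.
Proof.
have -> : [set p | block p != 0] = ~: [set p : 'I_n | p < n - f].
  by apply/setP => p; rewrite !inE /block; case: ifP => //; case: ifP.
have := cardsC [set p : 'I_n | p < n - f]; rewrite card_ord_lt ?card_ord ?leq_subr; lia.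
Qed.

Lemma card_block_ne1 : #|[set p | block p != 1]| = f.
Proof.
have -> : [set p | block p != 1] = ~: [set p : 'I_n | n - f <= p < 2 * (n - f)].
  apply/setP => p; rewrite !inE /block.
  by case: (ltnP p (n - f)) => H1; case: (ltnP p (2 * (n - f))) => H2 //=; lia.
have := cardsC [set p : 'I_n | n - f <= p < 2 * (n - f)].
rewrite card_ord_range ?card_ord; lia.
Qed.

Lemma n_gt0 : 0 < n. Proof. lia. Qed.
Lemma n_sub_f_lt_n : n - f < n. Proof. lia. Qed.

Definition proc0 : 'I_n := Ordinal n_gt0.
Definition proc1 : 'I_n := Ordinal n_sub_f_lt_n.

Lemma block_proc0 : block proc0 = 0.
Proof. by rewrite /block /=; case: ifP => //; lia. Qed.

Lemma block_proc1 : block proc1 = 1.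
Proof. by rewrite /block /= ltnn; case: ifP => //; lia. Qed.

Definition isolated_fp (g : nat) : fpattern n := fun _ => [set p | block p != g].

Lemma Faulty_isolated_fp g : Faulty (isolated_fp g) = [set p | block p != g].
Proof. by apply: Faulty_eq => [p Hp|//]; exists 0. Qed.

(* Blocks 0 and 1 are alive and cannot communicate before [D]; block 0
   crashes at [D] and block 2 at time 0, so f processes are faulty. *)
Definition gamma_alive (D t : nat) (p : 'I_n) :=
  ((block p == 0) && (t < D)) || (block p == 1).
Definition gamma_fp (D : nat) : fpattern n :=
  fun t => [set p | (block p == 2) || ((D <= t) && (block p == 0))].
Definition gamma_init (p : 'I_n) := block p == 0.

Lemma block_cases p : [\/ block p = 0, block p = 1 | block p = 2].
Proof.
rewrite /block; case: ifP => _; first by constructor 1.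
by case: ifP => _; [constructor 2|constructor 3].
Qed.

Lemma Faulty_gamma_fp D : Faulty (gamma_fp D) = [set p | block p != 1].
Proof.
apply: Faulty_eq => [p|t p]; rewrite !inE.
- by move=> Hp; exists D; rewrite inE leqnn /=; case: (block_cases p) Hp => ->.
- by case: (block_cases p) => ->; rewrite ?andbF.
Qed.

Section Algorithm.
Variable A : alg n.
Hypothesis A_solves : solves_with A (kTAg n k f) (kTAg n f f).

Lemma isolated_run_decision g V p : block p = g -> #|[set q | block q != g]| = f ->
  exists t d, dec A (st (sim_run A proc0 (fun _ q => block q == g) 0 block V) t p) = Some d
              /\ d \in kTAg_prob k (isolated_fp g) V.
Proof.
move=> Hp Hcard.
have FE := Faulty_isolated_fp g.
have Hrun : is_run (sim_run A proc0 (fun _ q => block q == g) 0 block V)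
              (kTAg n f f) (isolated_fp g) V.
  apply: sim_is_run => [t q|q|V'].
  - by rewrite inE negbK.
  - by rewrite FE inE negbK => Hq; exists 0.
  - by apply: kTAg_false_valid; rewrite FE Hcard.
have nondecr : nondecreasing (isolated_fp g) by move=> *; apply: subxx.
have cardF : #|Faulty (isolated_fp g)| <= f by rewrite FE Hcard.
have [term _ _ valid] := A_solves nondecr cardF Hrun.
have p_correct : p \notin Faulty (isolated_fp g) by rewrite FE inE Hp negbK.
have [t [d Hd]] := term p p_correct.
by exists t, d; split=> //; apply: valid Hd.
Qed.

Lemma alpha_decides_true : exists t,
  dec A (st (sim_run A proc0 (fun _ q => block q == 0) 0 block (fun _ => true)) t proc0)
  = Some true.
Proof.
have [t [d [Hd]]] := isolated_run_decision (fun _ => true) block_proc0 card_block_ne0.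
rewrite kTAg_all_ones ?Faulty_isolated_fp ?card_block_ne0 ?inE //; last by lia.
by move=> /eqP Ed; exists t; rewrite Hd Ed.
Qed.

Lemma beta_decides_false : exists t,
  dec A (st (sim_run A proc0 (fun _ q => block q == 1) 0 block (fun _ => false)) t proc1)
  = Some false.
Proof.
have [t [d [Hd]]] := isolated_run_decision (fun _ => false) block_proc1 card_block_ne1.
by rewrite kTAg_all_zeros // inE => /eqP Ed; exists t; rewrite Hd Ed.
Qed.

Lemma gamma_agreement D t t' d d' :
  dec A (st (sim_run A proc0 (gamma_alive D) D block gamma_init) t proc0) = Some d ->
  dec A (st (sim_run A proc0 (gamma_alive D) D block gamma_init) t' proc1) = Some d' ->
  d = d'.
Proof.
have cardF : #|Faulty (gamma_fp D)| = f by rewrite Faulty_gamma_fp card_block_ne1.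
have nondecr : nondecreasing (gamma_fp D).
  move=> u u' Hu; apply/subsetP => p; rewrite !inE.
  by case/orP => [->//|/andP [H1 ->]]; rewrite (leq_trans H1 Hu) orbT.
have Hrun : is_run (sim_run A proc0 (gamma_alive D) D block gamma_init)
              (kTAg n f f) (gamma_fp D) gamma_init.
  apply: sim_is_run => [u p|p|V'].
  - rewrite inE /gamma_alive.
    by case: (block_cases p) => ->; rewrite /= ?orbF ?andbT ?andbF // -ltnNge.
  - by rewrite Faulty_gamma_fp inE negbK => /eqP Hp; exists 0 => u _; rewrite /gamma_alive Hp orbT.
  - by apply: kTAg_false_valid; rewrite cardF.
have [_ _ agree _] := A_solves nondecr (eq_leq cardF) Hrun.
exact: agree.
Qed.

Lemma no_solution : False.
Proof.
have [t1 Ht1] := alpha_decides_true; have [t2 Ht2] := beta_decides_false.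
pose D := t1 + t2.
have Hstate0 : st (sim_run A proc0 (gamma_alive D) D block gamma_init) t1 proc0 =
               st (sim_run A proc0 (fun _ q => block q == 0) 0 block (fun _ => true)) t1 proc0.
  apply: (@sim_state_block_agree _ A proc0 block 0 _ _ D D) => //;
    rewrite ?leq_addr ?block_proc0 //.
  by move=> u p Hu /eqP Hp; rewrite /gamma_alive Hp Hu.
have Hstate1 : st (sim_run A proc0 (gamma_alive D) D block gamma_init) t2 proc1 =
               st (sim_run A proc0 (fun _ q => block q == 1) 0 block (fun _ => false)) t2 proc1.
  apply: (@sim_state_block_agree _ A proc0 block 1 _ _ D D) => //;
    rewrite ?leq_addl ?block_proc1 //.
  - by move=> u p _ /eqP Hp; rewrite /gamma_alive Hp orbT.
  - by move=> p /eqP Hp; rewrite /gamma_init Hp.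
by rewrite -Hstate0 in Ht1; rewrite -Hstate1 in Ht2; have := gamma_agreement Ht1 Ht2.
Qed.

End Algorithm.

Lemma kTAg_not_C_reducible : ~ C_reducible (kTAg n k f) (kTAg n f f).
Proof. by case=> A; apply: no_solution. Qed.

End Impossibility.

Theorem mainTheorem12 (n f : nat) :
  1 <= f -> f <= n - 1 -> n <= 2 * f ->
  ~ C_reducible (kTAg n f.+1 f) (kTAg n f f) /\
  ~ C_reducible (Cons_task n f) (kTAg n f f).
Proof.
move=> f_gt0 f_lt_n n_le_2f; split; apply: kTAg_not_C_reducible => //; lia.
Qed.
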